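(* Let $|\cdot|$ be a measurable norm on a separable, infinite-dimensional, real Hilbert space $H$, and let $M_0\subset H$ be a closed subspace with $\dim M_0=\infty$. Then there is a measurably adapted sequence $(F_n)_{n\geq1}$ of closed subspaces of $H$ with $F_1\supset F_0:=M_0^\perp$ and $\dim(F_1\cap M_0)<\infty$. Moreover, the linear span of the subspaces $F_n\cap F_{n-1}^\perp$, $n\geq 1$, is dense in $M_0$.
   Context: A norm $|\cdot|$ on a real separable Hilbert space $H$ is a measurable norm if for every $\epsilon>0$ there is a finite-dimensional subspace $F_0\subset H$ such that $\mathrm{Gauss}[v\in F_1: |v|>\epsilon]<\epsilon$ for every finite-dimensional subspace $F_1\subset H$ orthogonal to $F_0$, where $\mathrm{Gauss}$ is standard Gaussian measure on $F_1$. A sequence $(F_n)_{n\geq1}$ of closed subspaces of $H$ is measurably adapted if: (i) $F_1\subset F_2\subset\cdots$; (ii) $1\leq\dim(F_{n+1}\cap F_n^\perp)<\infty$ for all $n\ge1$; (iii) $\bigcup_n F_n$ is dense in $H$; (iv) for every $n\ge1$, $\mathrm{Gauss}[v\in F_{n+1}\cap F_n^\perp: |v|>2^{-n}]<2^{-n}$, with $\mathrm{Gauss}$ the standard Gaussian measure on $F_{n+1}\cap F_n^\perp$. *)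

From HB Require Import structures.
From mathcomp Require Import all_boot all_order all_algebra.
From mathcomp Require Import all_classical all_reals all_analysis.
Set Implicit Arguments. Unset Strict Implicit. Unset Printing Implicit Defensive.
Import Order.TTheory GRing.Theory Num.Theory.
Import numFieldNormedType.Exports.
Local Open Scope classical_set_scope.
Local Open Scope ring_scope.

Section HilbertDefs.
Context {R : realType} {H : normedModType R}.

Definition is_inner_product (ip : H -> H -> R) :=
  [/\ (forall x y, ip x y = ip y x),
      (forall (a : R) x y z, ip (a *: x + y) z = a * ip x z + ip y z),
      (forall x, 0 <= ip x x) &
      (forall x, `|x| = Num.sqrt (ip x x))].

(* a norm on H (a priori unrelated to the Hilbert norm) *)
Definition is_norm (N : H -> R) :=
  [/\ (forall x y, N (x + y) <= N x + N y),
      (forall (a : R) x, N (a *: x) = `|a| * N x) &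
      (forall x, N x = 0 -> x = 0)].

Definition separable := exists D : set H, countable D /\ closure D = setT.

Definition lspan (S : set H) : set H :=
  [set x | exists n (v : 'I_n -> H) (c : 'I_n -> R),
     (forall i, S (v i)) /\ x = \sum_(i < n) c i *: v i].

Definition subspace (S : set H) :=
  [/\ S 0, (forall x y, S x -> S y -> S (x + y)) &
      (forall (a : R) x, S x -> S (a *: x))].

Definition closed_subspace (S : set H) := subspace S /\ closed S.

Definition finite_dim (S : set H) := exists s : seq H, S `<=` lspan [set x | x \in s].

Definition infinite_dim (S : set H) := ~ finite_dim S.

Definition perp (ip : H -> H -> R) (S : set H) : set H :=
  [set x | forall y, S y -> ip x y = 0].

Definition orthogonal (ip : H -> H -> R) (S T : set H) :=
  forall x y, S x -> T y -> ip x y = 0.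

Definition onb (ip : H -> H -> R) (S : set H) (es : seq H) :=
  (forall i j, (i < size es)%N -> (j < size es)%N ->
     ip (nth 0 es i) (nth 0 es j) = (i == j)%:R) /\
  lspan [set x | x \in es] = S.

(* iterated integral of f (x_1 e_1 + ... + x_k e_k) against the standard
   Gaussian density in each coordinate x_i *)
Fixpoint gaussE (es : seq H) (f : H -> \bar R) : \bar R :=
  match es with
  | [::] => f 0
  | e :: es' => integral (@lebesgue_measure R) setT (fun x : R =>
                  ((normal_pdf 0 1 x)%:E * gaussE es' (fun v => f (x *: e + v)%R))%E)
  end.

(* standard Gaussian measure of A on the finite-dimensional subspace F,
   computed in an (arbitrarily chosen) orthonormal basis of F *)
Definition Gauss (ip : H -> H -> R) (F : set H) (A : set H) : \bar R :=
  gaussE (xget [::] (onb ip F)) (fun v => (\1_(A `&` F) v)%:E).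

Definition measurable_norm (ip : H -> H -> R) (N : H -> R) :=
  is_norm N /\
  forall eps : R, 0 < eps -> exists F0 : set H,
    subspace F0 /\ finite_dim F0 /\
    forall F1 : set H, subspace F1 -> finite_dim F1 -> orthogonal ip F1 F0 ->
      (Gauss ip F1 [set v | (N v > eps)%R] < eps%:E)%E.

(* F n, for n >= 1, is a measurably adapted sequence (F 0 is not part of it) *)
Definition measurably_adapted (ip : H -> H -> R) (N : H -> R) (F : nat -> set H) :=
  [/\ (forall n, (1 <= n)%N -> closed_subspace (F n)),
      (forall n, (1 <= n)%N -> F n `<=` F n.+1),
      (forall n, (1 <= n)%N ->
         (exists x, F n.+1 x /\ perp ip (F n) x /\ x != 0) /\
         finite_dim (F n.+1 `&` perp ip (F n))),
      closure (\bigcup_(n in [set n | (1 <= n)%N]) F n) = setT &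
      (forall n, (1 <= n)%N ->
         (Gauss ip (F n.+1 `&` perp ip (F n)) [set v | (N v > 2 ^- n)%R]
            < (2 ^- n : R)%:E)%E)].

End HilbertDefs.

From Pilot Require Import Defs.
From HB Require Import structures.
From mathcomp Require Import all_boot all_order all_algebra.
From mathcomp Require Import all_classical all_reals all_analysis.
From mathcomp Require Import ring lra.
Set Implicit Arguments. Unset Strict Implicit. Unset Printing Implicit Defensive.
Import Order.TTheory GRing.Theory Num.Theory.
Import numFieldNormedType.Exports.
Local Open Scope classical_set_scope.
Local Open Scope ring_scope.

(* Grow an orthonormal sequence in [M0] by Gram-Schmidt, one finite block per
   step, and let [F_n] be [M0^perp] plus the span of the first [n] blocks.  Block
   [n] is chosen so that its span contains the projections onto [M0] of the
   [n]-th point of a dense sequence (so the blocks span a dense subspace of [M0]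
   and the [F_n] exhaust [H]) and of a finite set [s] spanning the subspace that
   measurability of the norm provides for the tolerance 2^-(n+1).  The next block
   lies in [M0] and is orthogonal to the earlier ones, hence orthogonal to every
   [v = (v - P v) + P v] in [s]; this gives its Gaussian estimate.  Since [M0] is
   infinite-dimensional, every block can be made non-empty.  The projection [P]
   onto the closed subspace [M0] is obtained by minimizing the distance, which
   needs the completeness of [H]. *)

Lemma quadratic_ge0_discr {R : realFieldType} (a b c : R) : 0 < c ->
  (forall t, 0 <= a - 2 * b * t + c * t ^+ 2) -> b ^+ 2 <= a * c.
Proof.
move=> c0 /(_ (b / c)).
have -> : a - 2 * b * (b / c) + c * (b / c) ^+ 2 = a - b ^+ 2 / c.
  by field; rewrite gt_eqF.
by rewrite subr_ge0 ler_pdivrMr.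
Qed.

Section InnerProduct.
Variables (R : realType) (H : normedModType R) (ip : H -> H -> R).
Hypothesis ip_inner : is_inner_product ip.

Lemma ipC x y : ip x y = ip y x. Proof. by case: ip_inner. Qed.
Lemma ip_ge0 x : 0 <= ip x x. Proof. by case: ip_inner. Qed.
Lemma norm_ip x : `|x| = Num.sqrt (ip x x). Proof. by case: ip_inner. Qed.

Lemma ip_linear_l a x y z : ip (a *: x + y) z = a * ip x z + ip y z.
Proof. by case: ip_inner. Qed.

Lemma ip0l z : ip 0 z = 0.
Proof. by have := ip_linear_l 1 0 0 z; rewrite scale1r !addr0 mul1r; lra. Qed.
Lemma ipDl x y z : ip (x + y) z = ip x z + ip y z.
Proof. by rewrite -[x in LHS]scale1r ip_linear_l mul1r. Qed.
Lemma ipZl a x z : ip (a *: x) z = a * ip x z.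
Proof. by rewrite -[_ *: _]addr0 ip_linear_l ip0l addr0. Qed.
Lemma ipNl x z : ip (- x) z = - ip x z.
Proof. by rewrite -scaleN1r ipZl mulN1r. Qed.
Lemma ipBl x y z : ip (x - y) z = ip x z - ip y z.
Proof. by rewrite ipDl ipNl. Qed.

Lemma ip0r z : ip z 0 = 0. Proof. by rewrite ipC ip0l. Qed.
Lemma ipDr x y z : ip z (x + y) = ip z x + ip z y.
Proof. by rewrite ipC ipDl !(ipC z). Qed.
Lemma ipZr a x z : ip z (a *: x) = a * ip z x.
Proof. by rewrite ipC ipZl ipC. Qed.
Lemma ipNr x z : ip z (- x) = - ip z x.
Proof. by rewrite ipC ipNl ipC. Qed.
Lemma ipBr x y z : ip z (x - y) = ip z x - ip z y.
Proof. by rewrite ipC ipBl !(ipC z). Qed.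

Lemma ip_suml I (r : seq I) (P : pred I) (F : I -> H) z :
  ip (\sum_(i <- r | P i) F i) z = \sum_(i <- r | P i) ip (F i) z.
Proof. by apply: (big_morph (ip ^~ z)) => [x y|]; rewrite ?ipDl ?ip0l. Qed.

Lemma ip_sumr I (r : seq I) (P : pred I) (F : I -> H) z :
  ip z (\sum_(i <- r | P i) F i) = \sum_(i <- r | P i) ip z (F i).
Proof. by rewrite ipC ip_suml; apply: eq_bigr => i _; rewrite ipC. Qed.

Lemma sqr_norm_ip x : `|x| ^+ 2 = ip x x.
Proof. by rewrite norm_ip sqr_sqrtr // ip_ge0. Qed.

Lemma ler_norm_ip x y : (`|x| <= `|y|) = (ip x x <= ip y y).
Proof. by rewrite -ler_sqr ?nnegrE // !sqr_norm_ip. Qed.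

Lemma ltr_norm_sqr x e : 0 <= e -> (`|x| < e) = (ip x x < e ^+ 2).
Proof. by move=> e0; rewrite -ltr_sqr ?nnegrE // sqr_norm_ip. Qed.

Lemma ip_self_eq0 x : ip x x = 0 -> x = 0.
Proof. by move=> h; apply/normr0_eq0; rewrite norm_ip h sqrtr0. Qed.

Lemma ip_sub_scale x y t :
  ip (x - t *: y) (x - t *: y) = ip x x - 2 * ip x y * t + ip y y * t ^+ 2.
Proof. by rewrite ipBl !ipBr !ipZl !ipZr (ipC y x); ring. Qed.

Lemma pythagoras x y : ip x y = 0 -> ip (x + y) (x + y) = ip x x + ip y y.
Proof. by move=> h; rewrite ipDl !ipDr h (ipC y x) h addr0 add0r. Qed.

Lemma parallelogram x y :
  ip (x - y) (x - y) + ip (x + y) (x + y) = 2 * ip x x + 2 * ip y y.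
Proof. by rewrite ipBl !ipBr ipDl !ipDr (ipC y x); ring. Qed.

Lemma cauchy_schwarz x y : `|ip x y| <= `|x| * `|y|.
Proof.
have [->|y0] := eqVneq y 0; first by rewrite ip0r !normr0 mulr0.
have yy0 : 0 < ip y y.
  by rewrite lt_def ip_ge0 andbT; apply: contra_neq y0; apply: ip_self_eq0.
have /(quadratic_ge0_discr yy0) :
    forall t, 0 <= ip x x - 2 * ip x y * t + ip y y * t ^+ 2.
  by move=> t; rewrite -ip_sub_scale ip_ge0.
move=> h; rewrite -ler_sqr ?nnegrE ?mulr_ge0 // exprMn !sqr_norm_ip.
by rewrite real_normK ?num_real.
Qed.

Lemma ip_continuous_l y : continuous (ip ^~ y).
Proof.
move=> x; apply/cvgrPdist_lt => e e0.
have y1 : 0 < `|y| + 1 by rewrite ltr_wpDl.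
near=> z; rewrite -ipBl; apply: le_lt_trans (cauchy_schwarz _ _) _.
apply: (@le_lt_trans _ _ (`|x - z| * (`|y| + 1))); first by rewrite ler_wpM2l ?lerDl.
rewrite -ltr_pdivlMr //; near: z.
by apply: cvgr_dist_lt; [exact: cvg_id | rewrite divr_gt0].
Unshelve. all: by end_near.
Qed.

Lemma closed_perp (T : set H) : closed (perp ip T).
Proof.
have -> : perp ip T = \bigcap_(y in T) (ip ^~ y) @^-1` [set 0].
  by apply/seteqP; split => [x hx y /hx|x hx y /hx].
apply: closed_bigI => y _; apply: preimage_closed; last exact: closed_eq.
by move=> x _; apply: ip_continuous_l.
Qed.

Lemma lspan_sub_subspace (S T : set H) : Defs.subspace S -> T `<=` S -> lspan T `<=` S.
Proof.
move=> [S0 SD SZ] TS _ [n [v [c [Tv ->]]]].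
elim: n c v Tv => [|n IH] c v Tv; first by rewrite big_ord0.
by rewrite big_ord_recr /=; apply: SD; [exact: IH | apply/SZ/TS].
Qed.

Lemma lspan_seq (T : set H) (L : seq H) (c : H -> R) :
  (forall u, u \in L -> T u) -> lspan T (\sum_(u <- L) c u *: u).
Proof.
move=> LT; exists (size L), (nth 0 L), (fun i => c (nth 0 L i)).
by split => [i|]; [apply/LT/mem_nth | rewrite (big_nth 0) big_mkord].
Qed.

Lemma lspanS (S T : set H) : S `<=` T -> lspan S `<=` lspan T.
Proof. by move=> ST _ [n [v [c [Sv ->]]]]; exists n, v, c; split=> // i; apply: ST. Qed.

Lemma ip_lspan_eq0 (T : set H) y z :
  (forall v, T v -> ip v z = 0) -> lspan T y -> ip y z = 0.
Proof.
move=> Tz [n [v [c [Tv ->]]]]; rewrite ip_suml big1 // => i _.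
by rewrite ipZl Tz // mulr0.
Qed.

Definition orthonormal (L : seq H) :=
  uniq L /\ forall u v, u \in L -> v \in L -> ip u v = (u == v)%:R.

Definition oproj (L : seq H) x := \sum_(u <- L) ip x u *: u.

(* Fixed points of [oproj L]; for orthonormal [L] this is the linear span of [L]
   ([ospanE]). *)
Definition ospan (L : seq H) := [set x | oproj L x = x].

Lemma oproj0 L : oproj L 0 = 0.
Proof. by rewrite /oproj big1 // => u _; rewrite ip0l scale0r. Qed.
Lemma oprojD L x y : oproj L (x + y) = oproj L x + oproj L y.
Proof. by rewrite /oproj -big_split; apply: eq_bigr => u _; rewrite ipDl scalerDl. Qed.
Lemma oprojZ L a x : oproj L (a *: x) = a *: oproj L x.
Proof. by rewrite /oproj scaler_sumr; apply: eq_bigr => u _; rewrite ipZl scalerA. Qed.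
Lemma oproj_cat L N x : oproj (L ++ N) x = oproj L x + oproj N x.
Proof. exact: big_cat. Qed.

Lemma ip_oprojC L x y : ip (oproj L x) y = ip x (oproj L y).
Proof.
rewrite ip_suml ip_sumr; apply: eq_bigr => u _.
by rewrite ipZl ipZr mulrC ipC.
Qed.

Lemma ospan_subspace L : Defs.subspace (ospan L).
Proof.
split=> [|x y hx hy|a x hx]; rewrite /ospan /=.
- exact: oproj0.
- by rewrite oprojD hx hy.
- by rewrite oprojZ hx.
Qed.

Lemma ospan_nil x : ospan [::] x -> x = 0.
Proof. by rewrite /ospan /= /oproj big_nil => <-. Qed.

Lemma perp_subspace (T : set H) : Defs.subspace (perp ip T).
Proof.
split=> [y _|x y hx hy z Tz|a x hx z Tz]; first exact: ip0l.
- by rewrite ipDl hx ?hy ?addr0.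
- by rewrite ipZl hx ?mulr0.
Qed.

Lemma orthonormal_rcons L u : orthonormal L ->
  (forall v, v \in L -> ip u v = 0) -> ip u u = 1 -> orthonormal (L ++ [:: u]).
Proof.
move=> [uL oL] uLperp u1.
have uNL : u \notin L by apply/negP => /uLperp; rewrite u1 => /eqP; rewrite oner_eq0.
split=> [|a b]; first by rewrite cat_uniq uL /= orbF uNL.
rewrite !mem_cat !mem_seq1 => /orP[aL|/eqP->] /orP[bL|/eqP->].
- exact: oL.
- have /negbTE -> : a != u by apply: contraNneq uNL => <-.
  by rewrite ipC uLperp.
- have /negbTE -> : u != b by apply: contraNneq uNL => ->.
  by rewrite uLperp.
- by rewrite eqxx u1.
Qed.

Section Orthonormal.
Variable L : seq H.
Hypothesis L_on : orthonormal L.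

Lemma ip_oproj x v : v \in L -> ip (oproj L x) v = ip x v.
Proof.
case: L_on => uL oL vL; rewrite ip_suml (bigD1_seq v) //=.
rewrite ipZl (oL v v) // eqxx mulr1 big1_seq ?addr0 // => u /andP[uv uL'].
by rewrite ipZl (oL u v) // (negbTE uv) mulr0.
Qed.

Lemma ospan_mem (v : H) : v \in L -> ospan L v.
Proof.
case: L_on => uL oL vL; rewrite /ospan /= /oproj (bigD1_seq v) //=.
rewrite (oL v v) // eqxx scale1r big1_seq ?addr0 // => u /andP[uv uL'].
by rewrite (oL v u) // eq_sym (negbTE uv) scale0r.
Qed.

Lemma orthonormal_neq0 u : u \in L -> u != 0.
Proof.
case: L_on => _ oL uL; apply/eqP => u0; move: (oL u u uL uL).
by rewrite u0 ip0l eqxx => /eqP; rewrite eq_sym oner_eq0.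
Qed.

Lemma ospanE : ospan L = lspan [set x | x \in L].
Proof.
apply/seteqP; split=> [x <-|]; first exact: lspan_seq.
by apply: lspan_sub_subspace; [exact: ospan_subspace | exact: ospan_mem].
Qed.

Lemma oproj_ospan x : ospan L (oproj L x).
Proof. by rewrite ospanE; apply: lspan_seq. Qed.

Lemma ip_oproj_perp x y : ospan L y -> ip (x - oproj L x) y = 0.
Proof.
rewrite ospanE => Ly; rewrite ipC; apply: ip_lspan_eq0 Ly => v vL.
by rewrite ipC ipBl ip_oproj // subrr.
Qed.

End Orthonormal.

Section OrthonormalCat.
Variables L N : seq H.
Hypothesis LN_on : orthonormal (L ++ N).

Lemma orthonormal_catl : orthonormal L.
Proof.
case: LN_on; rewrite cat_uniq => /and3P[uL _ _] o.
by split=> // u v uL' vL; apply: o; rewrite mem_cat ?uL' ?vL.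
Qed.

Lemma orthonormal_catr : orthonormal N.
Proof.
case: LN_on; rewrite cat_uniq => /and3P[_ _ uN] o.
by split=> // u v uN' vN; apply: o; rewrite mem_cat ?uN' ?vN orbT.
Qed.

Lemma ip_cat_cross u v : u \in L -> v \in N -> ip u v = 0.
Proof.
case: LN_on => uLN o uL vN; rewrite o ?mem_cat ?uL ?vN ?orbT //.
case: eqVneq => // uv; move: uLN; rewrite cat_uniq => /and3P[_ /hasPn /(_ v vN)].
by rewrite -uv uL.
Qed.

Lemma ip_ospan_cat x y : ospan L x -> ospan N y -> ip x y = 0.
Proof.
rewrite (ospanE orthonormal_catl) (ospanE orthonormal_catr) => Lx Ny.
rewrite ipC; apply: ip_lspan_eq0 Ny => v vN; rewrite ipC.
by apply: ip_lspan_eq0 Lx => u uL; apply: ip_cat_cross.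
Qed.

Lemma ospan_catl : ospan L `<=` ospan (L ++ N).
Proof.
move=> x Lx; rewrite /ospan /= oproj_cat Lx /oproj big1_seq ?addr0 // => v /andP[_ vN].
by rewrite ip_ospan_cat ?scale0r //; apply: ospan_mem orthonormal_catr _ vN.
Qed.

Lemma ospan_catr : ospan N `<=` ospan (L ++ N).
Proof.
move=> x Nx; rewrite /ospan /= oproj_cat Nx /oproj big1_seq ?add0r // => u /andP[_ uL].
by rewrite ipC ip_ospan_cat ?scale0r //; apply: ospan_mem orthonormal_catl _ uL.
Qed.

End OrthonormalCat.

Section GramSchmidt.
Variable S : set H.
Hypothesis S_sub : Defs.subspace S.

Lemma oproj_in L x : (forall u, u \in L -> S u) -> S (oproj L x).
Proof. by move=> LS; apply: lspan_sub_subspace S_sub _ _ (lspan_seq _ LS). Qed.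

Lemma gram_schmidt_step L w : orthonormal L -> (forall u, u \in L -> S u) -> S w ->
  exists N, [/\ orthonormal (L ++ N), (forall u, u \in N -> S u) & ospan (L ++ N) w].
Proof.
case: S_sub => _ SD SZ L_on LS Sw; pose r := w - oproj L w.
have [r0|r_neq0] := eqVneq r 0.
  by exists [::]; rewrite cats0; split=> //; apply/eqP; rewrite eq_sym -subr_eq0 -/r r0.
have r_gt0 : 0 < `|r| by rewrite normr_gt0.
pose u := `|r|^-1 *: r.
have r_perp v : v \in L -> ip r v = 0.
  by move=> vL; rewrite /r (ip_oproj_perp L_on) //; apply: ospan_mem.
have uL v : v \in L -> ip u v = 0 by move=> /r_perp rv; rewrite ipZl rv mulr0.
have u1 : ip u u = 1 by rewrite ipZl ipZr -sqr_norm_ip; field; rewrite gt_eqF.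
have LN_on := orthonormal_rcons L_on uL u1.
have Sr : S r by rewrite /r -scaleN1r; apply: SD => //; apply/SZ/oproj_in.
exists [:: u]; split=> // [v|]; first by rewrite mem_seq1 => /eqP->; apply: SZ.
have wu : ip w u = `|r|.
  have Lw_u : ip (oproj L w) u = 0.
    by rewrite ip_suml big1_seq // => v /andP[_ vL]; rewrite ipZl (ipC v) uL ?mulr0.
  rewrite -(subrK (oproj L w) w) -/r ipDl Lw_u addr0 ipZr -sqr_norm_ip.
  by field; rewrite gt_eqF.
rewrite /ospan /= oproj_cat /oproj big_seq1 wu scalerA divff ?gt_eqF // scale1r.
by rewrite addrC subrK.
Qed.

Lemma gram_schmidt (L W : seq H) : orthonormal L -> (forall u, u \in L -> S u) ->
  (forall w, w \in W -> S w) ->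
  exists N, [/\ orthonormal (L ++ N), (forall u, u \in N -> S u) &
                forall w, w \in W -> ospan (L ++ N) w].
Proof.
elim: W L => [|w W IH] L L_on LS WS; first by exists [::]; rewrite cats0.
have [N1 [LN1_on N1S wN1]] := gram_schmidt_step L_on LS (WS w (mem_head _ _)).
have LN1S u : u \in L ++ N1 -> S u by rewrite mem_cat => /orP[/LS|/N1S].
have WS' v : v \in W -> S v by move=> vW; apply: WS; rewrite in_cons vW orbT.
have [N2 [LN_on N2S WN2]] := IH _ LN1_on LN1S WS'.
exists (N1 ++ N2); rewrite catA; split=> [//|u|v].
  by rewrite mem_cat => /orP[/N1S|/N2S].
by rewrite in_cons => /orP[/eqP->|/WN2 //]; apply: ospan_catl.
Qed.

Lemma gram_schmidt_proper (L W : seq H) : infinite_dim S ->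
  orthonormal L -> (forall u, u \in L -> S u) -> (forall w, w \in W -> S w) ->
  exists N, [/\ orthonormal (L ++ N), (forall u, u \in N -> S u), N != [::] &
                forall w, w \in W -> ospan (L ++ N) w].
Proof.
move=> S_inf L_on LS WS; have [N1 [LN1_on N1S WN1]] := gram_schmidt L_on LS WS.
have LN1S u : u \in L ++ N1 -> S u by rewrite mem_cat => /orP[/LS|/N1S].
have [z Sz zN1] : exists2 z, S z & ~ ospan (L ++ N1) z.
  apply: contrapT => S_fin; apply: S_inf; exists (L ++ N1) => z Sz.
  by rewrite -ospanE //; apply: contrapT => zN1; apply: S_fin; exists z.
have [N2 [LN_on N2S zN2]] := gram_schmidt_step LN1_on LN1S Sz.
exists (N1 ++ N2); rewrite catA; split=> [//|u||w /WN1]; last exact: ospan_catl.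
- by rewrite mem_cat => /orP[/N1S|/N2S].
- case: N2 LN_on N2S zN2 => [_ _|u N2 _ _ _]; first by rewrite cats0.
  by rewrite -size_eq0 size_cat /= addnS.
Qed.

End GramSchmidt.

Section AdaptedSpaces.
Variable M0 : set H.
Hypothesis M0_sub : Defs.subspace M0.

Definition Fspace (L : seq H) := [set a + e | a in perp ip M0 & e in ospan L].

Section Fspace.
Variable L : seq H.
Hypotheses (L_on : orthonormal L) (LM0 : forall u, u \in L -> M0 u).

Lemma ospan_sub_M0 : ospan L `<=` M0.
Proof. by rewrite ospanE //; apply: lspan_sub_subspace. Qed.

Lemma perp_sub_Fspace : perp ip M0 `<=` Fspace L.
Proof. by move=> a Ma; exists a => //; exists 0; rewrite ?addr0 //; apply: oproj0. Qed.

Lemma ospan_sub_Fspace : ospan L `<=` Fspace L.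
Proof. by move=> e Le; exists 0; [move=> y _; rewrite ip0l | exists e; rewrite ?add0r]. Qed.

(* Presents [Fspace L] as an orthogonal complement, hence as a closed set. *)
Lemma FspaceE : Fspace L = perp ip [set m - oproj L m | m in M0].
Proof.
apply/seteqP; split=> [_ [a Ma [e Le <-]] _ [m M0m <-]|x x_perp].
  rewrite ipDl ipBr (ipC e) ip_oproj_perp // (Ma m) // (Ma (oproj L m)) ?subrr ?addr0 //.
  exact: ospan_sub_M0 (oproj_ospan L_on m).
exists (x - oproj L x); last by exists (oproj L x); rewrite ?subrK //; apply: oproj_ospan.
by move=> m M0m; rewrite ipBl ip_oprojC -ipBr; apply: x_perp; exists m.
Qed.

Lemma Fspace_closed_subspace : closed_subspace (Fspace L).
Proof. by rewrite FspaceE; split; [apply: perp_subspace | apply: closed_perp]. Qed.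

Lemma Fspace_perp_perp : Fspace L `&` perp ip (perp ip M0) `<=` ospan L.
Proof.
move=> _ [[a Ma [e Le <-]] ae_perp]; have := ae_perp a Ma.
rewrite ipDl (ipC e) (Ma e) ?addr0; last exact: ospan_sub_M0.
by move=> /ip_self_eq0->; rewrite add0r.
Qed.

End Fspace.

Lemma Fspace_nil : Fspace [::] = perp ip M0.
Proof.
apply/seteqP; split=> [_ [a Ma [e /ospan_nil -> <-]]|]; first by rewrite addr0.
exact: perp_sub_Fspace.
Qed.

Section FspaceCat.
Variables L N : seq H.
Hypotheses (LN_on : orthonormal (L ++ N)) (LNM0 : forall u, u \in L ++ N -> M0 u).

Lemma Fspace_catl : Fspace L `<=` Fspace (L ++ N).
Proof. by move=> _ [a Ma [e Le <-]]; exists a => //; exists e => //; apply: ospan_catl. Qed.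

Lemma Fspace_cat_perp : Fspace (L ++ N) `&` perp ip (Fspace L) = ospan N.
Proof.
have L_on := orthonormal_catl LN_on; have N_on := orthonormal_catr LN_on.
have LM0 u : u \in L -> M0 u by move=> uL; apply: LNM0; rewrite mem_cat uL.
have NM0 u : u \in N -> M0 u by move=> uN; apply: LNM0; rewrite mem_cat uN orbT.
apply/seteqP; split=> [x [LNx x_perp]|x Nx].
  have x_LN : ospan (L ++ N) x.
    apply: Fspace_perp_perp => //; split=> // a Ma.
    by apply: x_perp; apply: perp_sub_Fspace.
  have Lx0 : oproj L x = 0.
    rewrite /oproj big1_seq // => u /andP[_ uL].
    by rewrite x_perp ?scale0r //; apply/ospan_sub_Fspace/ospan_mem.
  by move: x_LN; rewrite /ospan /= oproj_cat Lx0 add0r.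
split; first exact/ospan_sub_Fspace/ospan_catr.
move=> _ [a Ma [e Le <-]]; rewrite ipDr (ipC x a) Ma ?add0r; last exact: ospan_sub_M0 Nx.
by rewrite ipC (ip_ospan_cat LN_on Le Nx).
Qed.

End FspaceCat.

End AdaptedSpaces.

End InnerProduct.

Section Projection.
Variables (R : realType) (H : completeNormedModType R) (ip : H -> H -> R).
Hypothesis ip_inner : is_inner_product ip.
Variable S : set H.
Hypothesis S_closed : closed_subspace S.

Let S_subspace : Defs.subspace S. Proof. by case: S_closed. Qed.

Lemma perp_of_minimizer x p : S p ->
  (forall m, S m -> ip (x - p) (x - p) <= ip (x - m) (x - m)) -> perp ip S (x - p).
Proof.
case: S_subspace => _ SD SZ Sp pmin y Sy; set c := ip (x - p) y.
have : c ^+ 2 <= 0 * (ip y y + 1).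
  apply: quadratic_ge0_discr => [|t]; first by rewrite ltr_wpDl ?ip_ge0.
  have := pmin _ (SD _ _ Sp (SZ t _ Sy)).
  rewrite opprD addrA (ip_sub_scale ip_inner) -/c; have := sqr_ge0 t; lra.
by rewrite mul0r => c2_le0; apply/eqP; rewrite -sqrf_eq0 eq_le c2_le0 sqr_ge0.
Qed.

(* Parallelogram law at the midpoint [(u + v) / 2], which lies in [S]. *)
Lemma minimizing_close x d u v a b : S u -> S v ->
  (forall m, S m -> d <= ip (x - m) (x - m)) ->
  ip (x - u) (x - u) <= d + a -> ip (x - v) (x - v) <= d + b ->
  ip (u - v) (u - v) <= 2 * a + 2 * b.
Proof.
case: S_subspace => _ SD SZ Su Sv d_le ua vb.
set w := 2^-1 *: (u + v).
have /d_le dw : S w by apply/SZ/SD.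
have := parallelogram ip_inner (x - v) (x - u).
have -> : x - v - (x - u) = u - v by rewrite opprB addrC addrA subrK.
have -> : x - v + (x - u) = 2 *: (x - w).
  rewrite scalerBr /w scalerA divff ?pnatr_eq0 // scale1r scaler_nat mulr2n.
  by rewrite addrACA -opprD (addrC v).
rewrite (ipZl ip_inner) (ipZr ip_inner); lra.
Qed.

Lemma harmonic_close_cvg (m : nat -> H) :
  (forall j k, ip (m j - m k) (m j - m k) <= 2 * harmonic j + 2 * harmonic k) ->
  cvgn m.
Proof.
move=> m_close; apply/cauchy_cvgP/cauchy_exP => e e0.
have e4 : 0 < e ^+ 2 / 4 by rewrite divr_gt0 ?exprn_gt0.
have [K _ hK] := cvgr_dist_lt _ _ (@cvg_harmonic R) _ e4.
exists (m K); exists K => // n Kn.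
rewrite -ball_normE /= (ltr_norm_sqr ip_inner) ?ltW //.
apply: le_lt_trans (m_close K n) _.
have := hK K (leqnn K); have := hK n Kn.
rewrite !sub0r !normrN !ger0_norm ?harmonic_ge0 //.
have : e ^+ 2 = 4 * (e ^+ 2 / 4) by rewrite mulrC divfK.
lra.
Qed.

Lemma minimizer_exists x :
  exists2 p, S p & forall m, S m -> ip (x - p) (x - p) <= ip (x - m) (x - m).
Proof.
have [S0 _ _] := S_subspace.
pose dist2 := [set ip (x - m) (x - m) | m in S]; pose d := inf dist2.
have dist2_inf : has_inf dist2.
  by split; [exists (ip (x - 0) (x - 0)), 0 | exists 0 => _ [m _ <-]; apply: ip_ge0].
have d_le m : S m -> d <= ip (x - m) (x - m).
  by move=> Sm; apply: (ge_inf dist2_inf.2); exists m.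
have near_inf n : exists y, S y /\ ip (x - y) (x - y) < d + harmonic n.
  by have [_ [y Sy <-] yd] := inf_adherent (harmonic_gt0 n) dist2_inf; exists y.
have [m mP] := choice near_inf.
have m_close j k : ip (m j - m k) (m j - m k) <= 2 * harmonic j + 2 * harmonic k.
  have [[Smj mj] [Smk mk]] := (mP j, mP k).
  exact: minimizing_close Smj Smk d_le (ltW mj) (ltW mk).
have m_cvg : cvgn m by apply: harmonic_close_cvg.
exists (limn m).
  by apply: closed_cvg m_cvg; [case: S_closed | apply: nearW => n; case: (mP n)].
move=> y Sy; apply: le_trans (d_le _ Sy); rewrite -(sqr_norm_ip ip_inner) -(addr0 d).
apply: (ler_cvg_to (a := eventually) (f := fun n => `|x - m n| * `|x - m n|)).
- by rewrite expr2; apply: cvgM; apply: cvg_norm; apply: cvgB => //; exact: cvg_cst.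
- by apply: cvgD; [exact: cvg_cst | exact: cvg_harmonic].
- by apply: nearW => n; rewrite -expr2 (sqr_norm_ip ip_inner); case: (mP n) => _ /ltW.
Qed.

Definition orth_proj x := xget 0 [set p | S p /\ perp ip S (x - p)].

Lemma orth_projP x : S (orth_proj x) /\ perp ip S (x - orth_proj x).
Proof.
have [p Sp pmin] := minimizer_exists x; rewrite /orth_proj.
apply: (xgetPex 0 (P := [set p | S p /\ perp ip S (x - p)])).
by exists p; split; last exact: perp_of_minimizer.
Qed.

Lemma orth_proj_contract m x : S m -> `|m - orth_proj x| <= `|m - x|.
Proof.
case: S_subspace => _ SD SZ Sm; have [SPx Px_perp] := orth_projP x.
have uv : ip (m - orth_proj x) (orth_proj x - x) = 0.
  rewrite -[orth_proj x - x]opprB (ipNr ip_inner) (ipC ip_inner) Px_perp ?oppr0 //.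
  by rewrite -scaleN1r; apply: SD => //; apply: SZ.
have -> : m - x = (m - orth_proj x) + (orth_proj x - x) by rewrite addrA subrK.
by rewrite (ler_norm_ip ip_inner) (pythagoras ip_inner uv) lerDl ip_ge0.
Qed.

End Projection.

Lemma closure_normP {R : realType} {V : normedModType R} (A : set V) x :
  closure A x <-> forall e : R, 0 < e -> exists2 z, A z & `|x - z| < e.
Proof.
split=> [Ax e e0|Ax B /nbhs_ballP[e e0 eB]].
  by have [z [Az]] := Ax _ (nbhsx_ballx x e e0); rewrite -ball_normE; exists z.
by have [z Az xz] := Ax e e0; exists z; split=> //; apply: eB; rewrite -ball_normE.
Qed.

Lemma separable_seq {R : realType} {H : normedModType R} :
  separable (H := H) -> exists f : nat -> H, closure (range f) = setT.
Proof.
move=> [D [/pfcard_geP[D0|/surjfunPex[f Df]] D_dense]]; last by exists f; rewrite -Df.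
have : closure D 0 by rewrite D_dense.
by rewrite D0 closure0.
Qed.

Lemma measurable_norm_seq {R : realType} {H : normedModType R} (ip : H -> H -> R) N :
  is_inner_product ip -> measurable_norm ip N ->
  exists s : nat -> seq H, forall k (F1 : set H),
    Defs.subspace F1 -> finite_dim F1 -> (forall x v, F1 x -> v \in s k -> ip x v = 0) ->
    (Gauss ip F1 [set v | (N v > 2 ^- k)%R] < (2 ^- k : R)%:E)%E.
Proof.
move=> ip_inner [_ N_meas].
suff /choice[s s_gauss] : forall k, exists s : seq H, forall F1 : set H,
    Defs.subspace F1 -> finite_dim F1 -> (forall x v, F1 x -> v \in s -> ip x v = 0) ->
    (Gauss ip F1 [set v | (N v > 2 ^- k)%R] < (2 ^- k : R)%:E)%E by exists s.
move=> k.
have k_gt0 : 0 < 2 ^- k :> R by rewrite invr_gt0 exprn_gt0.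
have [G [_ [[s Gs] G_gauss]]] := N_meas _ k_gt0.
exists s => F1 F1_sub F1_fin F1_s; apply: G_gauss => // x y F1x /Gs.
by rewrite (ipC ip_inner); apply: ip_lspan_eq0 => // v; rewrite (ipC ip_inner); apply: F1_s.
Qed.

Section Construction.
Variables (R : realType) (H : completeNormedModType R) (ip : H -> H -> R) (N : H -> R).
Hypothesis ip_inner : is_inner_product ip.
Variable M0 : set H.
Hypotheses (M0_closed : closed_subspace M0) (M0_inf : infinite_dim M0).
Variables (f : nat -> H) (s : nat -> seq H).
Hypothesis f_dense : closure (range f) = setT.
Hypothesis s_gauss : forall k (F1 : set H),
  Defs.subspace F1 -> finite_dim F1 -> (forall x v, F1 x -> v \in s k -> ip x v = 0) ->
  (Gauss ip F1 [set v | (N v > 2 ^- k)%R] < (2 ^- k : R)%:E)%E.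

Let M0_sub : Defs.subspace M0. Proof. by case: M0_closed. Qed.

Definition extension (L W : seq H) := xget [::] [set E |
  [/\ orthonormal ip (L ++ E), (forall u, u \in E -> M0 u), E != [::] &
      forall w, w \in W -> ospan ip (L ++ E) w]].

Lemma extensionP (L W : seq H) : orthonormal ip L -> (forall u, u \in L -> M0 u) ->
  (forall w, w \in W -> M0 w) ->
  let E := extension L W in
  [/\ orthonormal ip (L ++ E), (forall u, u \in E -> M0 u), E != [::] &
      forall w, w \in W -> ospan ip (L ++ E) w].
Proof.
move=> L_on LM0 WM0.
exact (xgetPex [::] (gram_schmidt_proper ip_inner M0_sub M0_inf L_on LM0 WM0)).
Qed.

(* Projections of [f n] (for density) and of [s n.+1] (for the Gaussian bound
   on the next gap). *)
Definition targets n := orth_proj ip M0 (f n) :: map (orth_proj ip M0) (s n.+1).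

Fixpoint family n :=
  if n is k.+1 then family k ++ extension (family k) (targets k) else [::].

Definition adapted_seq n := Fspace ip M0 (family n).

Lemma targets_M0 n w : w \in targets n -> M0 w.
Proof.
rewrite in_cons => /orP[/eqP->|/mapP[y _ ->]]; exact: (orth_projP ip_inner M0_closed _).1.
Qed.

Lemma family_spec n : orthonormal ip (family n) /\ forall u, u \in family n -> M0 u.
Proof.
elim: n => [|n [L_on LM0]]; first by split=> //; split.
have [LE_on EM0 _ _] := extensionP L_on LM0 (@targets_M0 n).
by split=> // u; rewrite /= mem_cat => /orP[/LM0|/EM0].
Qed.

Lemma family_succ_spec n : let E := extension (family n) (targets n) in
  [/\ orthonormal ip (family n ++ E), (forall u, u \in family n ++ E -> M0 u), E != [::] &
      forall w, w \in targets n -> ospan ip (family n.+1) w].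
Proof.
have [L_on LM0] := family_spec n; have [_ LEM0] := family_spec n.+1.
by have [] := extensionP L_on LM0 (@targets_M0 n).
Qed.

Lemma adapted_seq_gap n :
  adapted_seq n.+1 `&` perp ip (adapted_seq n) = ospan ip (extension (family n) (targets n)).
Proof. by have [LE_on LEM0 _ _] := family_succ_spec n; apply: Fspace_cat_perp. Qed.

Definition gap n := adapted_seq n `&` perp ip (adapted_seq n.-1).

Lemma gap_sub_ospan n : gap n `<=` ospan ip (family n).
Proof.
have [L_on LM0] := family_spec n; move=> x [Fx x_perp].
apply: (Fspace_perp_perp ip_inner M0_sub L_on LM0); split=> // a Ma.
by apply: x_perp; apply: perp_sub_Fspace.
Qed.

Lemma family_sub_gaps n u :
  u \in family n -> (\bigcup_(k in [set k | (1 <= k)%N]) gap k) u.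
Proof.
elim: n => [//|n IH]; rewrite /= mem_cat => /orP[/IH //|uE].
exists n.+1 => //; suff : (adapted_seq n.+1 `&` perp ip (adapted_seq n)) u by [].
have [LE_on _ _ _] := family_succ_spec n.
by rewrite adapted_seq_gap; apply: ospan_mem (orthonormal_catr LE_on) _ uE.
Qed.

Lemma gaps_dense :
  closure (lspan (\bigcup_(n in [set n | (1 <= n)%N]) gap n)) = M0.
Proof.
apply/seteqP; split.
  have span_M0 : lspan (\bigcup_(n in [set n | (1 <= n)%N]) gap n) `<=` M0.
    apply: lspan_sub_subspace => // x [n _ /gap_sub_ospan].
    by have [L_on LM0] := family_spec n; apply: ospan_sub_M0.
  by case: M0_closed => _ M0_cl x /(closureS span_M0) /M0_cl.
move=> m M0m; apply/closure_normP => e e0.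
have /closure_normP/(_ e e0)[_ [k _ <-] m_fk] : closure (range f) m by rewrite f_dense.
exists (orth_proj ip M0 (f k)); last first.
  exact: le_lt_trans (orth_proj_contract ip_inner M0_closed _ M0m) m_fk.
have [_ _ _ /(_ _ (mem_head _ _))] := family_succ_spec k.
have [L_on _] := family_spec k.+1.
by rewrite (ospanE ip_inner) //; apply: lspanS => u; apply: family_sub_gaps.
Qed.

Lemma adapted_seq_dense :
  closure (\bigcup_(n in [set n | (1 <= n)%N]) adapted_seq n) = setT.
Proof.
apply/seteqP; split=> // x _; have : closure (range f) x by rewrite f_dense.
apply: closureS => _ [k _ <-]; exists k.+1 => //.
have [_ _ _ /(_ _ (mem_head _ _)) Pfk] := family_succ_spec k.
exists (f k - orth_proj ip M0 (f k)); first exact: (orth_projP ip_inner M0_closed _).2.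
by exists (orth_proj ip M0 (f k)); rewrite ?subrK.
Qed.

Lemma adapted_seq_gauss n : (1 <= n)%N ->
  (Gauss ip (adapted_seq n.+1 `&` perp ip (adapted_seq n)) [set v | (N v > 2 ^- n)%R]
     < (2 ^- n : R)%:E)%E.
Proof.
case: n => // n _; rewrite adapted_seq_gap.
have [LE_on LEM0 _ _] := family_succ_spec n.+1.
have E_on := orthonormal_catr LE_on.
apply: s_gauss => [||x v Ex vs]; first exact: ospan_subspace.
  by exists (extension (family n.+1) (targets n.+1)); rewrite -(ospanE ip_inner).
have M0x : M0 x.
  by apply: ospan_sub_M0 Ex => // u uE; apply: LEM0; rewrite mem_cat uE orbT.
rewrite -[v in ip x v](subrK (orth_proj ip M0 v)) (ipDr ip_inner) (ipC ip_inner x).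
rewrite (orth_projP ip_inner M0_closed v).2 // add0r (ipC ip_inner).
have [_ _ _ /(_ (orth_proj ip M0 v))] := family_succ_spec n.
by rewrite in_cons map_f ?orbT // => /(_ isT) Pv; rewrite (ip_ospan_cat ip_inner LE_on Pv Ex).
Qed.

Lemma adapted_seq_measurably_adapted : measurably_adapted ip N adapted_seq.
Proof.
split=> [n _|n _|n _||]; last exact: adapted_seq_gauss.
- by have [L_on LM0] := family_spec n; apply: Fspace_closed_subspace.
- by have [LE_on _ _ _] := family_succ_spec n; apply: Fspace_catl.
- have [LE_on _ E_nil _] := family_succ_spec n; have E_on := orthonormal_catr LE_on.
  have gapE := adapted_seq_gap n; set E := extension _ _ in E_nil E_on gapE.
  split; last by rewrite gapE; exists E; rewrite -(ospanE ip_inner).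
  have uE : nth 0 E 0 \in E by rewrite mem_nth // lt0n size_eq0.
  have [Fu u_perp] : (adapted_seq n.+1 `&` perp ip (adapted_seq n)) (nth 0 E 0).
    by rewrite gapE; apply: ospan_mem uE.
  by exists (nth 0 E 0); split=> //; split=> //; apply: orthonormal_neq0 E_on _ uE.
- exact: adapted_seq_dense.
Qed.

Lemma adapted_seq_spec :
  [/\ adapted_seq 0 = perp ip M0, measurably_adapted ip N adapted_seq,
      adapted_seq 0 `<=` adapted_seq 1, finite_dim (adapted_seq 1 `&` M0) &
      closure (lspan (\bigcup_(n in [set n | (1 <= n)%N]) gap n)) = M0].
Proof.
have [LE_on LEM0 _ _] := family_succ_spec 0; have [L1_on _] := family_spec 1.
split; [exact: Fspace_nil | exact: adapted_seq_measurably_adapted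
       | exact: Fspace_catl | | exact: gaps_dense].
exists (family 1) => x [F1x M0x]; rewrite -(ospanE ip_inner) //.
apply: (Fspace_perp_perp ip_inner M0_sub L1_on LEM0); split=> // a Ma.
by rewrite (ipC ip_inner); apply: Ma.
Qed.

End Construction.

Theorem lemma2p1 (R : realType) (H : completeNormedModType R)
  (ip : H -> H -> R) (N : H -> R) (M0 : set H) :
  is_inner_product ip -> separable (H := H) -> infinite_dim (@setT H) ->
  measurable_norm ip N ->
  closed_subspace M0 -> infinite_dim M0 ->
  exists F : nat -> set H,
    [/\ F 0%N = perp ip M0,
        measurably_adapted ip N F,
        F 0%N `<=` F 1%N,
        finite_dim (F 1%N `&` M0) &
        closure (lspan (\bigcup_(n in [set n | (1 <= n)%N])
                         (F n `&` perp ip (F n.-1)))) = M0].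
Proof.
(* [H] is infinite-dimensional because [M0] is. *)
move=> ip_inner H_sep _ N_meas M0_closed M0_inf.
have [f f_dense] := separable_seq H_sep.
have [s s_gauss] := measurable_norm_seq ip_inner N_meas.
by exists (adapted_seq ip M0 f s); apply: adapted_seq_spec.
Qed.
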